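(* Let $\mathcal{T}$ be a directed poset, $X:\mathcal{T}\to\mathbf{Set}_*$ a diagram of pointed sets, $A$ an abelian group, and $h\in G(X,A)$. Then $h\in K(X,A)$ if and only if the set $\{|h(t)|:t\in\mathcal{T}\}$ is bounded.
   Context: A directed poset $\mathcal{T}$ is regarded as a category with a single morphism $t\to s$ whenever $t\ge s$; $\phi_{t,s}:X(t)\to X(s)$ denotes the structure map. For a pointed set $Y$, $Y\wedge A:=\bigoplus_{Y\setminus\{*\}}A$, with elements finitely supported pointed maps $y:Y\to A$, $s\mapsto y_s$; $\mathrm{supp}(y)=\{s:y_s\neq0\}$ and $|y|:=|\mathrm{supp}(y)|$; $sv$ denotes the element with value $v$ at $s$ and $0$ elsewhere ($*v=0$); pointed maps induce homomorphisms via $f_*(sv)=f(s)v$. Define $G(X,A):=\lim_\mathcal{T}(X\wedge A)$ and let $K(X,A)\subseteq G(X,A)$ be the image of the (injective) natural map $\rho:(\lim_\mathcal{T}X)\wedge A\to G(X,A)$, $\rho(xv)(t)=x(t)v$. *)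

From HB Require Import structures.
From mathcomp Require Import all_boot all_order all_algebra.
From mathcomp Require Import finmap.
Set Implicit Arguments. Unset Strict Implicit. Unset Printing Implicit Defensive.
Import GRing.Theory.
Local Open Scope ring_scope.
Local Open Scope fset_scope.

Definition directed_poset (T : Type) (le : T -> T -> Prop) : Prop :=
  [/\ (forall t, le t t),
      (forall t s, le t s -> le s t -> t = s),
      (forall t s r, le r s -> le s t -> le r t)
    & (forall a b, exists c, le a c /\ le b c)].

(* A diagram X : T -> Set_* over the poset regarded as a category with a
   morphism t -> s whenever t >= s; map H : X t -> X s for H : le s t. *)
Record pdiagram (T : Type) (le : T -> T -> Prop) := PDiagram {
  obj : T -> choiceType;
  pt : forall t, obj t;
  map : forall t s, le s t -> obj t -> obj s;
  map_pt : forall t s (H : le s t), map H (pt t) = pt s;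
  map_id : forall t (H : le t t) x, map H x = x;
  map_comp : forall t s r (H1 : le s t) (H2 : le r s) (H3 : le r t) x,
      map H2 (map H1 x) = map H3 x
}.

Section Smash.
Variable (A : zmodType).

(* An element of the pointed set Y smash A is a finitely supported map
   y : Y -> A with y * = 0 ; its support is finsupp y. *)
Definition in_smash (Y : choiceType) (p : Y) (y : {fsfun Y -> A with 0}) : Prop :=
  y p = 0.

Definition supp_size (Y : choiceType) (y : {fsfun Y -> A with 0}) : nat :=
  #|` finsupp y|.

(* induced homomorphism f_* : Y smash A -> Z smash A, f_*(sv) = f(s)v,
   with the value at the basepoint q of Z forced to be 0 (since pt v = 0). *)
Definition pushf (Y Z : choiceType) (q : Z) (f : Y -> Z)
    (y : {fsfun Y -> A with 0}) : Z -> A :=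
  fun z => if z == q then 0 else \sum_(x <- finsupp y | f x == z) y x.
End Smash.

Section Lim.
Variables (T : Type) (le : T -> T -> Prop) (X : pdiagram le) (A : zmodType).

(* Elements of G(X,A) = lim_T (X smash A) *)
Definition inG (h : forall t, {fsfun obj X t -> A with 0}) : Prop :=
  (forall t, in_smash (pt X t) (h t)) /\
  (forall t s (H : le s t) (z : obj X s),
      pushf (pt X s) (map H) (h t) z = h s z).

Definition limX := {x : forall t, obj X t |
                     forall t s (H : le s t), map H (x t) = x s}.

(* rho applied to the formal finite sum sum_i x_i v_i in (lim X) smash A :
   rho(sum_i x_i v_i)(t) = sum_i x_i(t) v_i in X(t) smash A (evaluated at z). *)
Definition rho (l : seq (limX * A)) (t : T) (z : obj X t) : A :=
  if z == pt X t then 0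
  else \sum_(p <- l | sval p.1 t == z) p.2.

(* K(X,A) = image of rho: every element of (lim X) smash A is a finite sum
   of elements x v, and rho is additive. *)
Definition inK (h : forall t, {fsfun obj X t -> A with 0}) : Prop :=
  exists l : seq (limX * A), forall t (z : obj X t), h t z = rho l z.
End Lim.

(* (=>) If h = rho(sum_i x_i v_i), then supp h(t) is contained in the set of
   the x_i(t), so |h(t)| is at most the number of summands.

   (<=) Compatibility of h gives: every point of supp h(s) has a preimage in
   supp h(t) under phi_{t,s}.  Choose t0 where |h(t0)| is maximal.  For
   c >= t0, phi_{c,t0} therefore restricts to a surjection supp h(c) ->
   supp h(t0) between sets of which the first is not larger, i.e. to a
   bijection preserving the values of h.  Inverting it and pushing down along
   the directed poset turns each y in supp h(t0) into a compatible family
   x_y in lim_T X, and h = rho(sum_y x_y h(t0)(y)). *)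
From Pilot Require Import Defs.
From mathcomp Require Import all_boot all_order all_algebra.
From mathcomp Require Import finmap.
From mathcomp Require Import zify.
From Stdlib Require Import ClassicalEpsilon ProofIrrelevance Classical.
Set Implicit Arguments. Unset Strict Implicit. Unset Printing Implicit Defensive.
Import GRing.Theory.
Local Open Scope ring_scope.
Local Open Scope fset_scope.

Section Diagram.
Variables (T : Type) (le : T -> T -> Prop) (X : pdiagram le).

Local Notation phi := (@Defs.map _ _ X _ _).

Lemma phi_irr s t (H1 H2 : le s t) x : phi H1 x = phi H2 x.
Proof. by rewrite (proof_irrelevance _ H1 H2). Qed.

Lemma phi_comp t s r (H1 : le s t) (H2 : le r s) (H3 : le r t) x :
  phi H2 (phi H1 x) = phi H3 x.
Proof. exact: (@Defs.map_comp _ _ X t s r H1 H2 H3 x). Qed.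

End Diagram.

Section CompatibleFamilies.
Variables (T : Type) (le : T -> T -> Prop) (X : pdiagram le) (A : zmodType).
Variables (h : forall t, {fsfun obj X t -> A with 0}) (hG : inG h).

Local Notation phi := (@Defs.map _ _ X _ _).
Local Notation S t := (finsupp (h t)).

Lemma h_pt t : h t (pt X t) = 0.
Proof. by case: hG => Hpt _; apply: Hpt. Qed.

Lemma supp_neq_pt t x : x \in S t -> x != pt X t.
Proof. by rewrite mem_finsupp; apply: contraNneq => ->; rewrite h_pt. Qed.

Lemma h_push s t (H : le s t) z : z != pt X s ->
  h s z = \sum_(x <- S t | phi H x == z) h t x.
Proof. by move=> Hz; case: hG => _ Hc; rewrite -(Hc t s H z) /pushf (negbTE Hz). Qed.

Lemma supp_preimage s t (H : le s t) z :
  z \in S s -> exists2 x, x \in S t & phi H x = z.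
Proof.
move=> Hz; move: (Hz); rewrite mem_finsupp (h_push H (supp_neq_pt Hz)).
have [/hasP[x Hx /eqP <-] _|/hasPn Hn] := boolP (has (fun x => phi H x == z) (S t)).
  by exists x.
by rewrite big1_seq ?eqxx // => x /andP[Ex Hx]; move: (Hn x Hx); rewrite Ex.
Qed.

End CompatibleFamilies.

Section DirectedPoset.
Variables (T : Type) (le : T -> T -> Prop) (HT : directed_poset le).

Lemma le_trans_dp r s t : le r s -> le s t -> le r t.
Proof. by case: HT => _ _ Htr _; apply: Htr. Qed.

Lemma le_directed a b : exists c, le a c /\ le b c.
Proof. by case: HT. Qed.

End DirectedPoset.

Section MaximalSupport.
Variables (T : Type) (le : T -> T -> Prop) (HT : directed_poset le).
Variables (X : pdiagram le) (A : zmodType).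
Variables (h : forall t, {fsfun obj X t -> A with 0}) (hG : inG h).

Local Notation phi := (@Defs.map _ _ X _ _).
Local Notation S t := (finsupp (h t)).

Variables (t0 : T) (Hmax : forall t, (supp_size (h t) <= supp_size (h t0))%N).

Definition lift (c : T) (y : obj X t0) : obj X c :=
  epsilon (inhabits (pt X c))
    (fun x => x \in S c /\ exists H : le t0 c, phi H x = y).

Lemma lift_spec c (Hc : le t0 c) y : y \in S t0 ->
  lift c y \in S c /\ phi Hc (lift c y) = y.
Proof.
move=> Hy; have [x Hx Ex] := supp_preimage hG Hc Hy.
have [|Hl [H' E']] := epsilon_spec (inhabits (pt X c))
   (fun x => x \in S c /\ exists H : le t0 c, phi H x = y).
  by exists x; split => //; exists Hc.
by split => //; rewrite (phi_irr Hc H').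
Qed.

(* lift c is injective on supp h(t0) and, by maximality of |supp h(t0)|,
   its image is all of supp h(c): a bijection supp h(t0) -> supp h(c). *)
Lemma lift_perm c (Hc : le t0 c) : perm_eq (seq.map (lift c) (S t0)) (S c).
Proof.
have Huniq : uniq (seq.map (lift c) (S t0)).
  rewrite map_inj_in_uniq ?fset_uniq // => y1 y2 H1 H2 E.
  by rewrite -(lift_spec Hc H1).2 -(lift_spec Hc H2).2 E.
have Hsub : {subset seq.map (lift c) (S t0) <= S c}.
  by move=> x /mapP[y Hy ->]; exact: (lift_spec Hc Hy).1.
have Hsize : (size (S c) <= size (seq.map (lift c) (S t0)))%N.
  by rewrite size_map; exact: Hmax.
have [_ Hmem] := uniq_min_size Huniq Hsub Hsize.
exact: uniq_perm Huniq (fset_uniq _) Hmem.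
Qed.

Lemma supp_lift c (Hc : le t0 c) x : x \in S c -> exists2 y, y \in S t0 & x = lift c y.
Proof. by rewrite -(perm_mem (lift_perm Hc)) => /mapP. Qed.

Lemma phi_inj_supp c (Hc : le t0 c) : {in S c &, injective (phi Hc)}.
Proof.
move=> x1 x2 /(supp_lift Hc)[y1 Hy1 ->] /(supp_lift Hc)[y2 Hy2 ->].
by rewrite (lift_spec Hc Hy1).2 (lift_spec Hc Hy2).2 => ->.
Qed.

Lemma h_lift c (Hc : le t0 c) y : y \in S t0 -> h c (lift c y) = h t0 y.
Proof.
move=> Hy; rewrite (h_push hG Hc (supp_neq_pt hG Hy)) -(perm_big _ (lift_perm Hc)).
rewrite big_map big_seq_cond (eq_bigl (fun y' => (y' \in S t0) && (y' == y))).
  by rewrite -big_seq_cond -big_filter filter_pred1_uniq ?fset_uniq // big_seq1.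
by move=> y'; case H: (y' \in S t0) => //=; rewrite (lift_spec Hc H).2.
Qed.

Lemma lift_down c d (Hc : le t0 c) (Hcd : le c d) y : y \in S t0 ->
  phi Hcd (lift d y) = lift c y.
Proof.
move=> Hy; have Hd := le_trans_dp HT Hc Hcd.
have [Hpc Epc] := lift_spec Hc Hy; have [Hpd Epd] := lift_spec Hd Hy.
have [x Hx Ex] := supp_preimage hG Hcd Hpc.
suff -> : lift d y = x by [].
apply: (@phi_inj_supp _ Hd _ _ Hpd Hx).
by rewrite Epd -(phi_comp Hcd Hc Hd) Ex Epc.
Qed.

Lemma lift_indep t c c' (Ht : le t c) (Ht' : le t c') (Hc : le t0 c)
    (Hc' : le t0 c') y : y \in S t0 ->
  phi Ht (lift c y) = phi Ht' (lift c' y).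
Proof.
move=> Hy; have [d [Hcd Hc'd]] := le_directed HT c c'.
have Htd := le_trans_dp HT Ht Hcd.
rewrite -(lift_down Hc Hcd Hy) -(lift_down Hc' Hc'd Hy).
by rewrite (phi_comp Hcd Ht Htd) (phi_comp Hc'd Ht' Htd).
Qed.

Definition bound t : {c | le t c /\ le t0 c} :=
  constructive_indefinite_description _ (le_directed HT t t0).

Definition thread (y : obj X t0) (t : T) : obj X t :=
  phi (proj1 (proj2_sig (bound t))) (lift (proj1_sig (bound t)) y).

Lemma threadE y t c (Ht : le t c) (Hc : le t0 c) : y \in S t0 ->
  thread y t = phi Ht (lift c y).
Proof. by move=> Hy; rewrite /thread; case: (bound t) => c1 [H1 H2] /=; apply: lift_indep. Qed.

Definition compatible (x : forall t, obj X t) : Prop :=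
  forall t s (H : le s t), phi H (x t) = x s.

Lemma thread_compat y : y \in S t0 -> compatible (thread y).
Proof.
move=> Hy t s H; have [c [Ht Hc]] := le_directed HT t t0.
have Hs := le_trans_dp HT H Ht.
by rewrite (threadE Ht Hc Hy) (threadE Hs Hc Hy) (phi_comp Ht H Hs).
Qed.

Definition lim_pt : limX X :=
  @exist _ compatible (fun t => pt X t) (fun t s H => @map_pt _ _ X t s H).

Definition thread_lim (y : obj X t0) : limX X :=
  match Sumbool.sumbool_of_bool (y \in S t0) with
  | left Hy => @exist _ compatible (thread y) (thread_compat Hy)
  | right _ => lim_pt
  end.

Lemma thread_limE y : y \in S t0 -> sval (thread_lim y) = thread y.
Proof.
rewrite /thread_lim => Hy.
by case: (Sumbool.sumbool_of_bool (y \in S t0)) => [//|E]; rewrite E in Hy.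
Qed.

Lemma inK_of_max_supp : inK h.
Proof.
exists [seq (thread_lim y, h t0 y) | y <- S t0] => t z.
rewrite /rho; case: ifP => [/eqP -> | Hz]; first exact: h_pt.
have [c [Ht Hc]] := le_directed HT t t0.
rewrite (h_push hG Ht (negbT Hz)) -(perm_big _ (lift_perm Hc)) !big_map.
rewrite [LHS]big_seq_cond [RHS]big_seq_cond /=.
apply: eq_big => y; last by case/andP => Hy _; apply: h_lift.
by case Hy: (y \in S t0) => //=; rewrite thread_limE // (threadE Ht Hc Hy).
Qed.

End MaximalSupport.

Lemma bounded_attains_max (I : Type) (f : I -> nat) (N : nat) :
  (forall i, (f i <= N)%N) -> I -> exists i0, forall i, (f i <= f i0)%N.
Proof.
move=> HN i1.
suff Hk : forall k i, (N - k <= f i)%N -> exists i0, forall i, (f i <= f i0)%N.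
  by apply: (Hk N i1); rewrite subnn.
elim=> [|k IH] i Hi.
  by exists i => j; apply: leq_trans (HN j) _; rewrite subn0 in Hi.
have [[j Hj]|Hn] := classic (exists j, (f i < f j)%N).
  by apply: (IH j); lia.
by exists i => j; rewrite leqNgt; apply/negP => Hj; apply: Hn; exists j.
Qed.

Lemma nonzero_sum_mem (I : Type) (K : eqType) (B : zmodType) (l : seq I)
    (f : I -> K) (g : I -> B) x :
  \sum_(p <- l | f p == x) g p != 0 -> x \in seq.map f l.
Proof.
elim: l => [|p l IH]; first by rewrite big_nil eqxx.
rewrite big_cons /= inE; case: (f p =P x) => [-> _|_ /IH ->]; first by rewrite eqxx.
exact: orbT.
Qed.

Lemma supp_size_rho (T : Type) (le : T -> T -> Prop) (X : pdiagram le)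
    (A : zmodType) (h : forall t, {fsfun obj X t -> A with 0}) (l : seq (limX X * A)) :
  (forall t (z : obj X t), h t z = rho l z) ->
  forall t, (supp_size (h t) <= size l)%N.
Proof.
move=> Hl t; rewrite /supp_size -(size_map (fun p : limX X * A => sval p.1 t) l).
apply: uniq_leq_size (fset_uniq _) _ => x.
rewrite mem_finsupp Hl /rho; case: ifP => [_|_]; first by rewrite eqxx.
exact: nonzero_sum_mem.
Qed.

Theorem mainTheorem8 (T : Type) (le : T -> T -> Prop)
  (HT : directed_poset le) (X : pdiagram le) (A : zmodType)
  (h : forall t, {fsfun obj X t -> A with 0%R}) (hG : inG h) :
  inK h <-> exists N : nat, forall t, (supp_size (h t) <= N)%N.
Proof.
split=> [[l Hl] | [N HN]]; first by exists (size l); exact: supp_size_rho Hl.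
have [[t1 _] | Tempty] := classic (exists t : T, True).
  have [t0 Ht0] := bounded_attains_max HN t1.
  exact: (inK_of_max_supp HT hG (t0 := t0) Ht0).
by exists [::] => t; case: Tempty; exists t.
Qed.
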